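(* Consider a generalized Nash equilibrium problem with $N$ players in which the $i$th player, given $x_{-i}$, solves $\min_{x_i\in\mathbb{R}^{n_i}} f_i(x_i,x_{-i})$ subject to $g_i(x_i,x_{-i})\ge 0$, where $f_i$ and the components of $g_i$ are real polynomials in $x=(x_1,\dots,x_N)\in\mathbb{R}^n$. Suppose that there exists a nonempty closed set $X\subseteq\mathbb{R}^n$ and closed sets $D_i\subseteq\mathbb{R}^{n_i}$ with $(D_1\times\cdots\times D_N)\cap X\neq\emptyset$ such that $X_i(x_{-i})=\{x_i\in D_i:(x_i,x_{-i})\in X\}$ for all players $i$ and all $x_{-i}$. For each $i$ let \[ K_i=\{(x_i,y_i,x_{-i})\in\mathbb{R}^{n_i}\times\mathbb{R}^{n_i}\times\mathbb{R}^{n-n_i}:\ x_i,y_i\in X_i(x_{-i}),\ f_i(y_i,x_{-i})-f_i(x_i,x_{-i})\ge 0\}, \] and write $\triangle P_i=P(y_i,x_{-i})-P(x_i,x_{-i})$, $\triangle f_i=f_i(y_i,x_{-i})-f_i(x_i,x_{-i})$. If there exist polynomials $P\in\mathbb{R}[x]$ and $p_{i,0},p_{i,1}\in\mathbb{R}[x_i,y_i,x_{-i}]$ ($i=1,\dots,N$) such that $p_{i,0}\ge 0$ and $p_{i,1}\ge 0$ on $K_i$ and \[ \triangle P_i=(p_{i,0}+1)\,\triangle f_i+p_{i,1} \] (as an identity) for all $i$, then the problem is a generalized potential game.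
   Context: Notation: $x_{-i}=(x_1,\dots,x_{i-1},x_{i+1},\dots,x_N)$, $(y_i,x_{-i})$ is the point whose $i$th block is $y_i$ and other blocks are $x_{-i}$, and $X_i(x_{-i})=\{x_i: g_i(x_i,x_{-i})\ge 0\}$ is player $i$'s feasible set. Definition: the problem is a generalized potential game (GPG) if (i) there is a nonempty closed set $X\subseteq\mathbb{R}^n$ and closed sets $D_i\subseteq\mathbb{R}^{n_i}$ with $(D_1\times\cdots\times D_N)\cap X\ne\emptyset$ such that $X_i(x_{-i})=\{x_i\in D_i:(x_i,x_{-i})\in X\}$ for all players; and (ii) there exist a continuous function $P:\mathbb{R}^n\to\mathbb{R}$ and a forcing function $\sigma:\mathbb{R}_+\to\mathbb{R}_+$ (i.e., $\lim_k\sigma(t_k)=0$ implies $\lim_k t_k=0$) such that for all $i$, all $x_{-i}$ and all $y_i,x_i\in X_i(x_{-i})$: if $f_i(y_i,x_{-i})-f_i(x_i,x_{-i})>0$ then $P(y_i,x_{-i})-P(x_i,x_{-i})\ge\sigma\big(f_i(y_i,x_{-i})-f_i(x_i,x_{-i})\big)$. *)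

From HB Require Import structures.
From mathcomp Require Import all_boot all_order all_algebra.
From mathcomp Require Import all_classical all_reals all_analysis.
From mathcomp Require mpoly.

Set Implicit Arguments.
Unset Strict Implicit.
Unset Printing Implicit Defensive.

Import Order.TTheory GRing.Theory Num.Theory.
Import numFieldNormedType.Exports.
Local Open Scope classical_set_scope.
Local Open Scope ring_scope.

(* The joint strategy x = (x_1,...,x_N) lives in R^n, n = \sum_i nn i,
   represented as the block row vector 'rV_(\sum_i nn i) = \mxrow_i x_i. *)

Definition blk (R : Type) (N : nat) (nn : 'I_N -> nat)
  (x : 'rV[R]_(\sum_i nn i)) (i : 'I_N) : 'rV[R]_(nn i) := submxrow x i.

(* (y_i, x_{-i}) : the point whose i-th block is y_i and other blocks are those of x *)
Definition upd (R : Type) (N : nat) (nn : 'I_N -> nat)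
  (x : 'rV[R]_(\sum_i nn i)) (i : 'I_N) (y : 'rV[R]_(nn i)) : 'rV[R]_(\sum_i nn i) :=
  \mxrow_j (match i =P j with
            | ReflectT e => castmx (erefl, congr1 nn e) y
            | ReflectF _ => submxrow x j end).

Definition peval (R : realType) (m : nat) (p : mpoly.mpoly m R) (v : 'rV[R]_m) : R :=
  mpoly.meval (fun k => v ord0 k) p.

(* forcing function sigma : R_+ -> R_+ (represented on R, values on R_+ matter) *)
Definition forcing (R : realType) (sigma : R -> R) : Prop :=
  (forall t, 0 <= t -> 0 <= sigma t) /\
  (forall t_ : nat -> R, (forall k, 0 <= t_ k) ->
     (fun k => sigma (t_ k)) @ \oo --> (0 : R) -> t_ @ \oo --> (0 : R)).

(* Generalized potential game, for objective functions f_i : R^n -> R and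
   feasible-set maps Xf i x = X_i(x_{-i}) (a subset of R^{n_i}; it depends
   only on the blocks of x other than i). *)
Definition GPG (R : realType) (N : nat) (nn : 'I_N -> nat)
  (f : 'I_N -> 'rV[R]_(\sum_i nn i) -> R)
  (Xf : forall i : 'I_N, 'rV[R]_(\sum_i nn i) -> set 'rV[R]_(nn i)) : Prop :=
  (exists (X : set 'rV[R]_(\sum_i nn i)) (D : forall i : 'I_N, set 'rV[R]_(nn i)),
     [/\ X !=set0, closed X, (forall i, closed (D i)),
         (exists x, X x /\ forall i, D i (blk x i)) &
         (forall i x yi, Xf i x yi <-> D i yi /\ X (upd x yi))]) /\
  (exists (P : 'rV[R]_(\sum_i nn i) -> R) (sigma : R -> R),
     [/\ continuous P, forcing sigma &
         forall i x (yi xi : 'rV[R]_(nn i)), Xf i x yi -> Xf i x xi ->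
           f i (upd x yi) - f i (upd x xi) > 0 ->
           P (upd x yi) - P (upd x xi) >= sigma (f i (upd x yi) - f i (upd x xi))]).

From HB Require Import structures.
From mathcomp Require Import all_boot all_order all_algebra.
From mathcomp Require Import all_classical all_reals all_analysis.
From mathcomp Require mpoly.
From mathcomp Require Import lra.
Import Order.TTheory GRing.Theory Num.Theory.
Import numFieldNormedType.Exports.
Local Open Scope classical_set_scope.
Local Open Scope ring_scope.

(* Take the polynomial P itself as the potential and the identity as forcing
   function.  To compare two feasible strategies x_i, y_i of player i against
   x_{-i}, evaluate the certificate at the point x' = (x_i, x_{-i}): there
   dP = (p0 + 1) df + p1 with p0, p1 >= 0 whenever df >= 0, hence dP >= df. *)

Lemma blk_upd (R : Type) (N : nat) (nn : 'I_N -> nat)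
  (x : 'rV[R]_(\sum_i nn i)) (i : 'I_N) (y : 'rV[R]_(nn i)) :
  blk (upd x y) i = y.
Proof.
rewrite /blk /upd mxrowK; case: (i =P i) => // e.
by rewrite (eq_irrelevance e erefl) castmx_id.
Qed.

Lemma upd_upd (R : Type) (N : nat) (nn : 'I_N -> nat)
  (x : 'rV[R]_(\sum_i nn i)) (i : 'I_N) (y z : 'rV[R]_(nn i)) :
  upd (upd x z) y = upd x y.
Proof.
rewrite /upd; apply: eq_mxrow => j; case: (i =P j) => // ne.
by rewrite mxrowK; case: (i =P j).
Qed.

Section ContinuousBig.
Variables (R : numFieldType) (T : topologicalType) (I : Type).
Variables (s : seq I) (F : I -> T -> R) (x : T).
Hypothesis F_cont : forall i, {for x, continuous (F i)}.

Lemma sum_continuous : {for x, continuous (fun v => \sum_(i <- s) F i v)}.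
Proof.
rewrite -fct_sumE; apply: (big_ind (fun h : T -> R => {for x, continuous h})).
- exact: cst_continuous.
- by move=> g h; apply: continuousD.
- by move=> i _; apply: F_cont.
Qed.

Lemma prod_continuous : {for x, continuous (fun v => \prod_(i <- s) F i v)}.
Proof.
rewrite -fct_prodE; apply: (big_ind (fun h : T -> R => {for x, continuous h})).
- exact: cst_continuous.
- by move=> g h; apply: continuousM.
- by move=> i _; apply: F_cont.
Qed.

End ContinuousBig.

Lemma peval_continuous (R : realType) (n : nat) (p : mpoly.mpoly n R) :
  continuous (peval p).
Proof.
move=> v; rewrite /peval; under eq_fun do rewrite mpoly.mevalE.
apply: sum_continuous => m.
apply: (continuousM (s := fun=> mpoly.mcoeff m p)); first exact: cst_continuous.
apply: prod_continuous => i.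
apply: (@continuous_comp _ _ _ (fun w : 'rV[R]_n => w ord0 i) (fun r => r ^+ _)).
  exact: coord_continuous.
exact: exprn_continuous.
Qed.

(* The polynomials p_{i,0}, p_{i,1} are in the variables (x, y_i) = (x_i, x_{-i}, y_i),
   i.e. they live in R[n + n_i] and are evaluated at row_mx x y_i. *)
Theorem lemma4p5 (R : realType) (N : nat) (nn : 'I_N -> nat) (m : 'I_N -> nat)
  (f : forall i : 'I_N, mpoly.mpoly (\sum_j nn j) R)
  (g : forall i : 'I_N, 'I_(m i) -> mpoly.mpoly (\sum_j nn j) R)
  (X : set 'rV[R]_(\sum_j nn j)) (D : forall i : 'I_N, set 'rV[R]_(nn i))
  (P : mpoly.mpoly (\sum_j nn j) R)
  (p0 p1 : forall i : 'I_N, mpoly.mpoly (\sum_j nn j + nn i) R) :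
  let Xf := fun i (x : 'rV[R]_(\sum_j nn j)) =>
    [set yi : 'rV[R]_(nn i) | forall k, 0 <= peval (g i k) (upd x yi)] in
  X !=set0 -> closed X -> (forall i, closed (D i)) ->
  (exists x, X x /\ forall i, D i (blk x i)) ->
  (forall i x yi, Xf i x yi <-> D i yi /\ X (upd x yi)) ->
  (forall i (x : 'rV[R]_(\sum_j nn j)) (yi : 'rV[R]_(nn i)),
     Xf i x (blk x i) -> Xf i x yi ->
     peval (f i) (upd x yi) - peval (f i) x >= 0 ->
     0 <= peval (p0 i) (row_mx x yi) /\ 0 <= peval (p1 i) (row_mx x yi)) ->
  (forall i (x : 'rV[R]_(\sum_j nn j)) (yi : 'rV[R]_(nn i)),
     peval P (upd x yi) - peval P x =
       (peval (p0 i) (row_mx x yi) + 1) * (peval (f i) (upd x yi) - peval (f i) x)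
       + peval (p1 i) (row_mx x yi)) ->
  GPG (fun i x => peval (f i) x) Xf.
Proof.
move=> Xf X_neq0 X_closed D_closed X_meets_D Xf_decomp p_ge0 P_certificate.
split; first by exists X, D.
exists (peval P), id; split; [exact: peval_continuous | by split |].
move=> i x yi xi Xf_yi Xf_xi df_gt0 /=.
set x' := upd x xi.
have Xf_x' z : Xf i x' z = Xf i x z by rewrite /Xf /x' /= upd_upd.
have x'_yi : upd x' yi = upd x yi by rewrite upd_upd.
have [p0_ge0 p1_ge0] : 0 <= peval (p0 i) (row_mx x' yi) /\
                       0 <= peval (p1 i) (row_mx x' yi).
  apply: p_ge0; rewrite ?blk_upd ?Xf_x' ?x'_yi //; exact: ltW.
move: (P_certificate i x' yi) df_gt0 p0_ge0 p1_ge0; rewrite x'_yi => ->.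
set df := _ - _; set a := peval _ _; set b := peval _ _ => df_gt0 a_ge0 b_ge0.
nra.
Qed.
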